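(* Let $E: y^2=x^3+Ax^2+Bx$ ($A,B\in\mathbb{Z}$) with $E(\mathbb{Q})[2]\simeq\mathbb{Z}/2\mathbb{Z}$, let $d$ be squarefree and $p$ a prime with $p\mid d$ and $\gcd(p,2\Delta)=1$. Then $$W_p^d=\begin{cases}\langle d(A+2\sqrt{B})\rangle & \text{if } p \text{ is of type 1},\\ 1 & \text{if } p \text{ is of type 2},\\ \mathbb{Q}_p^\times/(\mathbb{Q}_p^\times)^2 & \text{if } p \text{ is of type 3},\\ \mathbb{Z}_p^\times/(\mathbb{Z}_p^\times)^2 & \text{if } p \text{ is of type 4}.\end{cases}$$
   Context: $\Delta$ is the discriminant of $E$ and $\Delta'$ that of $E': y^2=x^3-2Ax^2+(A^2-4B)x$ (up to squares $\Delta\equiv A^2-4B$, $\Delta'\equiv B$). $\phi:E\to E'$ is the 2-isogeny with kernel $\langle(0,0)\rangle$, $E^d,E'^d$ the quadratic twists by $d$, and $W_p^d=\kappa_p(E'^d(\mathbb{Q}_p)/\phi(E^d(\mathbb{Q}_p)))\subset\mathbb{Q}_p^\times/(\mathbb{Q}_p^\times)^2$ is the image of the local Kummer map. For a prime $p\nmid 2\Delta$: $p$ is of type 1 if $(\Delta/p)=1,(\Delta'/p)=1$; type 2 if $(\Delta/p)=1,(\Delta'/p)=-1$; type 3 if $(\Delta/p)=-1,(\Delta'/p)=1$; type 4 if $(\Delta/p)=-1,(\Delta'/p)=-1$. In type 1, $\sqrt{B}\in\mathbb{Q}_p$. *)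

From mathcomp Require Import all_boot all_order all_algebra.
Set Implicit Arguments. Unset Strict Implicit. Unset Printing Implicit Defensive.
Import Order.TTheory GRing.Theory Num.Theory.
Local Open Scope ring_scope.

Definition disc (A B : int) : int := 16 * B ^+ 2 * (A ^+ 2 - 4 * B).
(* discriminant of E' : y^2 = x^3 - 2A x^2 + (A^2 - 4B) x *)
Definition disc' (A B : int) : int := 256 * B * (A ^+ 2 - 4 * B) ^+ 2.

(* E(Q)[2] = Z/2Z : the only rational root of x^3 + A x^2 + B x is x = 0,
   i.e. (0,0) is the only rational point of order 2. *)
Definition two_torsion_Z2 (A B : int) : Prop :=
  forall x : rat, x ^+ 3 + A%:~R * x ^+ 2 + B%:~R * x = 0 -> x = 0.

Definition squarefree_int (d : int) : Prop :=
  d != 0 /\ forall m : nat, (m ^ 2 %| `|d|)%N -> m = 1%N.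

Definition legendre_one (p : nat) (a : int) : Prop :=
  ~~ (p%:Z %| a)%Z /\ exists x : int, (p%:Z %| x ^+ 2 - a)%Z.

Definition type1 p A B := legendre_one p (disc A B) /\ legendre_one p (disc' A B).
Definition type2 p A B := legendre_one p (disc A B) /\ ~ legendre_one p (disc' A B).
Definition type3 p A B := ~ legendre_one p (disc A B) /\ legendre_one p (disc' A B).
Definition type4 p A B := ~ legendre_one p (disc A B) /\ ~ legendre_one p (disc' A B).

(* [vge v M z] : v(z) >= M, with the convention v(0) = +oo *)
Definition vge (K : fieldType) (v : K -> int) (M : int) (z : K) : Prop :=
  z = 0 \/ M <= v z.

(* (K, v) is the field Q_p of p-adic numbers with its normalized valuation:
   a complete discretely valued field of characteristic 0 in which p is a
   uniformizer and whose residue field is F_p.  These properties characterize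
   Q_p up to unique isomorphism. *)
Definition is_Qp (p : nat) (K : fieldType) (v : K -> int) : Prop :=
  [/\ (forall n : nat, n.+1%:R != 0 :> K),
      (forall x y : K, x != 0 -> y != 0 -> v (x * y) = v x + v y),
      (forall x y : K, x != 0 -> y != 0 -> x + y != 0 ->
        Num.min (v x) (v y) <= v (x + y)),
      v p%:R = 1 /\
      (forall x : K, x != 0 -> 0 <= v x -> exists n : nat, vge v 1 (x - n%:R)) &
      forall u : nat -> K,
        (forall M : int, exists N : nat, forall n m : nat,
            (N <= n)%N -> (N <= m)%N -> vge v M (u n - u m)) ->
        exists l : K, forall M : int, exists N : nat, forall n : nat,
            (N <= n)%N -> vge v M (u n - l)].

Definition sqclass (K : fieldType) (x y : K) : Prop :=
  exists z : K, z != 0 /\ x = y * z ^+ 2.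

(* E'^d : y^2 = x^3 - 2dA x^2 + d^2 (A^2 - 4B) x ; points are None (= O)
   or Some (x, y) affine. *)
Definition on_Edual (K : fieldType) (A B d : int) (P : option (K * K)) : Prop :=
  match P with
  | None => True
  | Some (x, y) => y ^+ 2 = x ^+ 3 - 2 * (d * A)%:~R * x ^+ 2
                            + (d ^+ 2 * (A ^+ 2 - 4 * B))%:~R * x
  end.

(* kappa : E'^d(K) -> K^x/(K^x)^2 (connecting map of the 2-isogeny
   phi : E^d -> E'^d, given by O |-> 1, (0,0) |-> d^2(A^2-4B), (x,y) |-> x) *)
Definition kummer (K : fieldType) (A B d : int) (P : option (K * K)) : K :=
  match P with
  | None => 1
  | Some (x, y) => if x == 0 then (d ^+ 2 * (A ^+ 2 - 4 * B))%:~R else x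
  end.

(* the class of x lies in W_p^d = kappa(E'^d(Q_p)/phi(E^d(Q_p))) *)
Definition in_W (K : fieldType) (A B d : int) (x : K) : Prop :=
  exists P : option (K * K), on_Edual A B d P /\ sqclass x (kummer A B d P).

From mathcomp Require Import all_boot all_order all_algebra all_fingroup cyclic finfield.
From mathcomp Require Import zify ring.
From Stdlib Require Import Classical.
Set Implicit Arguments. Unset Strict Implicit. Unset Printing Implicit Defensive.
Import Order.TTheory GRing.Theory Num.Theory.
Local Open Scope ring_scope.

(* Since p is odd and prime to the discriminant, Hensel's lemma (Newton's iteration
   for a square root) shows that a p-adic unit is a square iff its residue mod p is.
   Hence the unit square classes are 1 and c = A^2 - 4B (c is a square iff (Δ/p) = 1,
   as Δ = (4B)^2 c), and B is a square in Q_p iff (Δ'/p) = 1, as Δ' = (16c)^2 B.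
   A point (x, y) of E'^d satisfies y^2 = x q(x) with q(x) = x^2 - 2dAx + d^2 c, and
   v(d) = 1.  If v(x) <= 0 then q(x) is x^2 times a unit = 1 mod p, so x = q(x) = 1 up
   to squares; if v(x) >= 2 then likewise x = q(x) = d^2 c = c.  If v(x) = 1 then
   x = d t with t a unit and (t - A)^2 = 4B mod p: impossible unless B is a square, and
   then t = A + 2√B or A - 2√B mod p, so x is in the class of d(A + 2√B) or of
   d(A - 2√B) = c d(A + 2√B).  Conversely the points O, (0, 0) and (d(A ± 2√B), 0)
   realise the classes 1, c and d(A ± 2√B), and every class of Q_p has a representative
   of valuation 0 or 1. *)

Section SquareClasses.
Variable K : fieldType.
Implicit Types x y z : K.

Lemma sqclass_refl x : sqclass x x.
Proof. by exists 1; rewrite oner_neq0 expr1n mulr1. Qed.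

Lemma sqclass_sym x y : sqclass x y -> sqclass y x.
Proof.
move=> [z [z0 ->]]; exists z^-1; split; first by rewrite invr_eq0.
by rewrite -mulrA -exprMn mulfV // expr1n mulr1.
Qed.

Lemma sqclass_trans x y w : sqclass x y -> sqclass y w -> sqclass x w.
Proof.
move=> [z1 [z10 ->]] [z2 [z20 ->]]; exists (z2 * z1); split; first by rewrite mulf_neq0.
by rewrite exprMn; ring.
Qed.

Lemma sqclassM x x' y y' : sqclass x x' -> sqclass y y' -> sqclass (x * y) (x' * y').
Proof.
move=> [z1 [z10 ->]] [z2 [z20 ->]]; exists (z1 * z2); split; first by rewrite mulf_neq0.
by rewrite exprMn; ring.
Qed.

Lemma sqclassMl x y w : sqclass x y -> sqclass (w * x) (w * y).
Proof. exact/sqclassM/sqclass_refl. Qed.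

Lemma sqclass_sqr z : z != 0 -> sqclass (z ^+ 2) 1.
Proof. by move=> z0; exists z; rewrite mul1r. Qed.

Lemma sqclass_neq0 x y : y != 0 -> sqclass x y -> x != 0.
Proof. by move=> y0 [z [z0 ->]]; rewrite mulf_neq0 ?expf_neq0. Qed.

Lemma sqclass_of_sqr_eq x q y : x != 0 -> q != 0 -> y ^+ 2 = x * q -> sqclass x q.
Proof.
move=> x0 q0 yE; have y0 : y != 0.
  by apply: contraNneq (mulf_neq0 x0 q0) => y0; rewrite -yE y0 expr2 mul0r.
exists (y / q); split; first by rewrite mulf_neq0 ?invr_eq0.
by rewrite expr_div_n yE; field.
Qed.

End SquareClasses.

Lemma sqr_mul_nonsqr (F : finFieldType) (a b : F) : a != 0 -> b != 0 ->
  ~ (exists y, y ^+ 2 = a) -> ~ (exists y, y ^+ 2 = b) -> exists y, y ^+ 2 = a * b.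
Proof.
have [g gen] := cyclicP (field_unit_group_cyclic [set: {unit F}]%G).
have power_g (e : F) : e != 0 -> exists i, e = FinRing.uval g ^+ i.
  move=> e0; have eU : e \is a GRing.unit by rewrite unitfE.
  have : FinRing.Unit eU \in <[g]>%g by rewrite -gen inE.
  by case/cycleP=> i ei; exists i; rewrite -FinRing.val_unitX -ei.
have odd_exp i : ~ (exists y, y ^+ 2 = FinRing.uval g ^+ i) -> odd i.
  case ei: (odd i) => // -[]; exists (FinRing.uval g ^+ i./2).
  by rewrite -exprM muln2 halfK ei subn0.
move=> /power_g[i ->] /power_g[j ->] /odd_exp oi /odd_exp oj.
exists (FinRing.uval g ^+ (i + j)./2).
by rewrite -exprM -exprD muln2 halfK oddD oi oj subn0.
Qed.

Section Legendre.
Variable p : nat.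
Hypothesis p_prime : prime p.

Lemma intr_Fp_eq0 (z : int) : ((z%:~R : 'F_p) == 0) = (p%:Z %| z)%Z.
Proof.
case: z => n; first by rewrite /= -(dvdn_pcharf (pchar_Fp p_prime)).
by rewrite NegzE mulrNz oppr_eq0 dvdzE abszN /= -(dvdn_pcharf (pchar_Fp p_prime)).
Qed.

Lemma legendre_oneE (z : int) :
  legendre_one p z <-> (z%:~R : 'F_p) != 0 /\ exists y : 'F_p, y ^+ 2 = z%:~R.
Proof.
split.
  case=> nz [x hx]; split; first by rewrite intr_Fp_eq0.
  exists x%:~R; apply/eqP; rewrite -subr_eq0 -rmorphXn -rmorphB /=.
  by rewrite intr_Fp_eq0.
case=> nz [y hy]; split; first by rewrite -intr_Fp_eq0.
exists (nat_of_ord y)%:Z; rewrite -intr_Fp_eq0 rmorphB /= rmorphXn /= -hy.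
by rewrite -[X in _ - X ^+ 2]natr_Zp subrr.
Qed.

Lemma legendre_one_mul (z w : int) : ~~ (p%:Z %| z)%Z -> ~~ (p%:Z %| w)%Z ->
  ~ legendre_one p z -> ~ legendre_one p w -> legendre_one p (z * w).
Proof.
rewrite -!intr_Fp_eq0 => z0 w0 zN wN; apply/legendre_oneE; rewrite rmorphM /=.
split; first by rewrite mulf_neq0.
by apply: sqr_mul_nonsqr => // -[y hy]; [apply: zN | apply: wN];
  apply/legendre_oneE; split=> //; exists y.
Qed.

End Legendre.

Section Valuation.
Variables (K : fieldType) (v : K -> int).
Hypothesis v_mul : forall x y : K, x != 0 -> y != 0 -> v (x * y) = v x + v y.
Hypothesis v_add : forall x y : K, x != 0 -> y != 0 -> x + y != 0 ->
  Num.min (v x) (v y) <= v (x + y).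
Implicit Types (x y z : K) (M N : int).

Lemma valuation1 : v 1 = 0.
Proof.
by have := v_mul (oner_neq0 K) (oner_neq0 K); rewrite mulr1; move: (v 1) => k; lia.
Qed.

Lemma valuationV x : x != 0 -> v x^-1 = - v x.
Proof.
move=> x0; have := v_mul x0 (invr_neq0 x0); rewrite mulfV // valuation1.
by move: (v x) (v x^-1) => k l; lia.
Qed.

Lemma valuationN x : x != 0 -> v (- x) = v x.
Proof.
have N1 : v (-1) = 0.
  have n1 : (-1 : K) != 0 by rewrite oppr_eq0 oner_neq0.
  by have := v_mul n1 n1; rewrite mulrNN mulr1 valuation1; move: (v _) => k; lia.
by move=> x0; rewrite -mulN1r v_mul ?oppr_eq0 ?oner_neq0 // N1 add0r.
Qed.

Lemma valuationX x n : x != 0 -> v (x ^+ n) = n%:Z * v x.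
Proof.
move=> x0; elim: n => [|n IH]; first by rewrite expr0 valuation1 mul0r.
by rewrite exprS v_mul ?expf_neq0 // IH; move: (v x) => k; lia.
Qed.

Lemma valuationXz x (k : int) : x != 0 -> v (x ^ k) = k * v x.
Proof.
move=> x0; case: k => n; first exact: valuationX.
by rewrite /= valuationV ?expf_neq0 // valuationX // NegzE; move: (v x) => k; lia.
Qed.

Lemma vge_valuation x : vge v (v x) x.
Proof. by right. Qed.

Lemma vge_le M x : x != 0 -> vge v M x -> M <= v x.
Proof. by move=> x0 [x0'|//]; rewrite x0' eqxx in x0. Qed.

Lemma vgeW M N x : N <= M -> vge v M x -> vge v N x.
Proof. by move=> NM [->|h]; [left | right; apply: le_trans h]. Qed.

Lemma vgeD M x y : vge v M x -> vge v M y -> vge v M (x + y).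
Proof.
have [-> _|x0 hx] := eqVneq x 0; first by rewrite add0r.
have [-> _|y0 hy] := eqVneq y 0; first by rewrite addr0.
have [->|s0] := eqVneq (x + y) 0; first by left.
right; apply: le_trans (v_add x0 y0 s0).
by rewrite le_min (vge_le x0 hx) (vge_le y0 hy).
Qed.

Lemma vgeN M x : vge v M x -> vge v M (- x).
Proof.
have [->|x0] := eqVneq x 0; first by rewrite oppr0.
by move=> /(vge_le x0) hx; right; rewrite valuationN.
Qed.

Lemma vgeB M x y : vge v M x -> vge v M y -> vge v M (x - y).
Proof. by move=> hx /vgeN; apply: vgeD. Qed.

Lemma vgeM M N x y : vge v M x -> vge v N y -> vge v (M + N) (x * y).
Proof.
have [->|x0] := eqVneq x 0; first by rewrite mul0r; left.
have [->|y0] := eqVneq y 0; first by rewrite mulr0; left.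
move=> /(vge_le x0) hx /(vge_le y0) hy.
by right; rewrite v_mul //; apply: lerD.
Qed.

Lemma vgeMunit M x u : u != 0 -> v u = 0 -> vge v M x -> vge v M (x * u).
Proof. by move=> u0 vu hx; rewrite -[M]addr0; apply: vgeM => //; right; rewrite vu. Qed.

Lemma vge0_nat n : vge v 0 (n%:R : K).
Proof.
elim: n => [|n IH]; first by left.
by rewrite -addn1 natrD; apply: vgeD => //; right; rewrite valuation1.
Qed.

Lemma vge0_int (z : int) : vge v 0 (z%:~R : K).
Proof. by case: z => n; [apply: vge0_nat | rewrite NegzE mulrNz; apply/vgeN/vge0_nat]. Qed.

Lemma vge_all_eq0 x : (forall M, vge v M x) -> x = 0.
Proof.
move=> hx; apply/eqP/negPn/negP => x0.
by have := vge_le x0 (hx (v x + 1)); move: (v x) => k; lia.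
Qed.

Lemma unit_vge1B x y : x != 0 -> v x = 0 -> vge v 1 (y - x) -> y != 0 /\ v y = 0.
Proof.
move=> x0 vx yx.
have y0 : y != 0.
  by apply/eqP=> y0; move: yx; rewrite y0 sub0r => /vgeN; rewrite opprK => /(vge_le x0); lia.
have vy_ge0 : 0 <= v y.
  apply: (vge_le y0); rewrite -(subrK x y).
  by apply: vgeD; [apply: vgeW yx | right; rewrite vx].
split=> //; apply/eqP; rewrite eq_le vy_ge0 andbT leNgt; apply/negP => vy.
have : vge v 1 x.
  have -> : x = y - (y - x) by rewrite opprB addrC subrK.
  by apply: vgeB => //; right.
by move/(vge_le x0); lia.
Qed.

Lemma vge1M x y : vge v 0 x -> vge v 0 y -> vge v 1 (x * y) -> vge v 1 x \/ vge v 1 y.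
Proof.
have [->|x0] := eqVneq x 0; first by left; left.
have [->|y0] := eqVneq y 0; first by right; left.
move=> /(vge_le x0) hx /(vge_le y0) hy /(vge_le (mulf_neq0 x0 y0)); rewrite v_mul // => hxy.
by have [h|h] := leP 1 (v x); [left; right | right; right; lia].
Qed.

Section Padic.
Variable p : nat.
Hypotheses (p_prime : prime p) (p_odd : odd p).
Hypothesis char0 : forall n : nat, n.+1%:R != 0 :> K.
Hypothesis v_p : v p%:R = 1.
Hypothesis residue : forall x, x != 0 -> 0 <= v x -> exists n : nat, vge v 1 (x - n%:R).
Hypothesis complete : forall u : nat -> K,
  (forall M, exists N : nat, forall n m : nat,
     (N <= n)%N -> (N <= m)%N -> vge v M (u n - u m)) ->
  exists l, forall M, exists N : nat, forall n : nat, (N <= n)%N -> vge v M (u n - l).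

Lemma p_neq0 : p%:R != 0 :> K.
Proof. by rewrite -(prednK (prime_gt0 p_prime)) char0. Qed.

Lemma intr_neq0 (z : int) : z != 0 -> z%:~R != 0 :> K.
Proof.
case: z => [[|n]|n] z0 //; first exact: char0.
by rewrite NegzE mulrNz oppr_eq0 char0.
Qed.

Lemma vge1_intr (z : int) : (p%:Z %| z)%Z -> vge v 1 (z%:~R : K).
Proof.
move=> /divzK <-; rewrite intrM -pmulrn -[1]add0r.
by apply: vgeM; [apply: vge0_int | right; rewrite v_p].
Qed.

Lemma intr_unit (z : int) : ~~ (p%:Z %| z)%Z -> (z%:~R : K) != 0 /\ v z%:~R = 0.
Proof.
move=> pz; have z0 : z != 0 by apply: contraNneq pz => ->; rewrite dvdz0.
have zK := intr_neq0 z0; split=> //.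
have [s [t st]] := Bezoutz p z.
have /eqP gcd1 : coprimez p z by rewrite coprimezE /= prime_coprime.
rewrite gcd1 in st.
apply/eqP; rewrite eq_le (vge_le zK (vge0_int z)) andbT leNgt; apply/negP => vz.
have : vge v 1 ((s * p%:Z + t * z)%:~R : K).
  rewrite intrD; apply: vgeD; first exact/vge1_intr/dvdz_mull/dvdzz.
  by rewrite intrM -[1]add0r; apply: vgeM; [apply: vge0_int | right].
by rewrite st => /(vge_le (oner_neq0 K)); rewrite valuation1.
Qed.

Lemma dvd_of_vge1_intr (z : int) : vge v 1 (z%:~R : K) -> (p%:Z %| z)%Z.
Proof.
move=> hz; apply/negPn/negP => /intr_unit [z0 vz].
by move: (vge_le z0 hz); rewrite vz.
Qed.

Lemma two_unit : (2 : K) != 0 /\ v 2 = 0.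
Proof.
apply: (intr_unit (z := 2)); rewrite dvdzE /=; apply/negP => /(@dvdn_leq _ 2 isT) p_le2.
have p2 : p = 2 by have := prime_gt1 p_prime; lia.
by move: p_odd; rewrite p2.
Qed.

Fixpoint newton_sqrt (u a : K) (n : nat) : K :=
  if n is m.+1 then let z := newton_sqrt u a m in (z + u / z) / 2 else a.

Lemma newton_step_vge u z M : z != 0 -> v z = 0 -> vge v M (z ^+ 2 - u) ->
  vge v M ((z + u / z) / 2 - z) /\ vge v (M + M) (((z + u / z) / 2) ^+ 2 - u).
Proof.
move=> z0 vz zu; have [t0 vt] := two_unit.
have w0 : (2 * z)^-1 != 0 by rewrite invr_eq0 mulf_neq0.
have vw : v (2 * z)^-1 = 0 by rewrite valuationV ?mulf_neq0 // v_mul // vt vz oppr0.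
have e_vge : vge v M ((z ^+ 2 - u) * (2 * z)^-1) by apply: vgeMunit.
split.
  have -> : (z + u / z) / 2 - z = - ((z ^+ 2 - u) * (2 * z)^-1) by field; apply/andP.
  exact: vgeN.
have -> : ((z + u / z) / 2) ^+ 2 - u =
          ((z ^+ 2 - u) * (2 * z)^-1) * ((z ^+ 2 - u) * (2 * z)^-1).
  by field; apply/andP.
exact: vgeM.
Qed.

Lemma newton_sqrt_unit u a : a != 0 -> v a = 0 -> vge v 1 (u - a ^+ 2) -> forall n,
  [/\ newton_sqrt u a n != 0, v (newton_sqrt u a n) = 0
    & vge v (n%:Z + 1) (newton_sqrt u a n ^+ 2 - u)].
Proof.
move=> a0 va ua; elim=> [|n [z0 vz zu]] /=.
  by split=> //; rewrite -opprB; apply: vgeN.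
set z := newton_sqrt u a n in z0 vz zu *.
have [zz' zu'] := newton_step_vge z0 vz zu.
have zz'1 : vge v 1 ((z + u / z) / 2 - z) by apply: vgeW zz'; lia.
have [z'0 vz'] := unit_vge1B z0 vz zz'1.
by split=> //; apply: vgeW zu'; lia.
Qed.

Lemma newton_sqrt_cauchy u a : a != 0 -> v a = 0 -> vge v 1 (u - a ^+ 2) -> forall n k,
  vge v (n%:Z + 1) (newton_sqrt u a (n + k) - newton_sqrt u a n).
Proof.
move=> a0 va ua n; elim=> [|k IH]; first by rewrite addn0 subrr; left.
have [z0 vz zu] := newton_sqrt_unit a0 va ua (n + k).
have [step _] := newton_step_vge z0 vz zu.
rewrite addnS /=; set z := newton_sqrt u a (n + k) in z0 vz zu step IH *.
have -> : (z + u / z) / 2 - newton_sqrt u a n =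
          ((z + u / z) / 2 - z) + (z - newton_sqrt u a n) by rewrite addrA subrK.
by apply: vgeD IH; apply: vgeW step; lia.
Qed.

Lemma hensel_sqrt u a : a != 0 -> v a = 0 -> vge v 1 (u - a ^+ 2) -> exists z, z ^+ 2 = u.
Proof.
move=> a0 va ua; pose z := newton_sqrt u a.
have cauchy := newton_sqrt_cauchy a0 va ua.
have [l zl] : exists l, forall M, exists N : nat, forall n, (N <= n)%N -> vge v M (z n - l).
  apply: complete => M; exists `|M|%N => n m Mn Mm.
  have -> : z n - z m = (z n - z `|M|%N) - (z m - z `|M|%N) by rewrite opprB addrA subrK.
  rewrite -(subnKC Mn) -(subnKC Mm); apply: vgeW (vgeB (cauchy _ _) (cauchy _ _)); lia.
exists l; apply/eqP; rewrite -subr_eq0; apply/eqP/vge_all_eq0 => M.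
have [N zlN] := zl `|M|%N%:Z.
pose n := maxn N `|M|.
have [z0 vz zu] := newton_sqrt_unit a0 va ua n.
have [t0 vt] := two_unit.
have lz : vge v `|M|%N%:Z (l - z n) by rewrite -opprB; apply/vgeN/zlN/leq_maxl.
have l_add_z : vge v 0 ((l - z n) + 2 * z n).
  by apply: vgeD; [apply: vgeW lz | right; rewrite v_mul // vt vz].
have -> : l ^+ 2 - u = (l - z n) * ((l - z n) + 2 * z n) + (z n ^+ 2 - u) by ring.
apply: vgeD; first by apply: vgeW (vgeM lz l_add_z); lia.
by apply: vgeW zu; lia.
Qed.

Lemma sqclass_near g t : g != 0 -> vge v (v g + 1) (t - g) -> sqclass t g.
Proof.
move=> g0 tg.
have tg1 : vge v 1 (t / g - 1 ^+ 2).
  have -> : t / g - 1 ^+ 2 = (t - g) * g^-1 by field.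
  have gV : vge v (- v g) g^-1 by right; rewrite valuationV.
  by apply: vgeW (vgeM tg gV); lia.
have [tg0 _] : t / g != 0 /\ v (t / g) = 0.
  by apply: unit_vge1B (oner_neq0 K) valuation1 _; rewrite expr1n in tg1.
have [z zE] := hensel_sqrt (oner_neq0 K) valuation1 tg1.
exists z; split; last by rewrite zE; field.
by apply: contraNneq tg0 => z0; rewrite -zE z0 expr2 mul0r.
Qed.

Lemma legendre_sqrt (z : int) : legendre_one p z ->
  exists t, [/\ t != 0, v t = 0 & t ^+ 2 = z%:~R].
Proof.
case=> pz [x px].
have pxx : ~~ (p%:Z %| x)%Z.
  apply: contraNN pz => pxx.
  have -> : z = x ^+ 2 - (x ^+ 2 - z) by rewrite opprB addrC subrK.
  by rewrite rpredB // expr2 dvdz_mulr.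
have [x0 vx] := intr_unit pxx; have [z0 vz] := intr_unit pz.
have [t tE] : exists t : K, t ^+ 2 = z%:~R.
  apply: (hensel_sqrt x0 vx); rewrite -opprB; apply: vgeN.
  by have := vge1_intr px; rewrite rmorphB /= rmorphXn.
have t0 : t != 0 by apply: contraNneq z0 => t0; rewrite -tE t0 expr2 mul0r.
exists t; split=> //.
by have := valuationX 2 t0; rewrite tE vz; move: (v t) => k; lia.
Qed.

Lemma legendre_of_vge1 (z : int) m : ~~ (p%:Z %| z)%Z -> vge v 0 m ->
  vge v 1 (m ^+ 2 - z%:~R) -> legendre_one p z.
Proof.
move=> pz m_int mz; split=> //.
have [m0|m0] := eqVneq m 0.
  move: mz; rewrite m0 expr2 mul0r sub0r => /vgeN; rewrite opprK.
  by move=> /dvd_of_vge1_intr pz'; rewrite pz' in pz.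
have [n mn] := residue m0 (vge_le m0 m_int).
exists n%:Z; apply: dvd_of_vge1_intr; rewrite rmorphB /= rmorphXn /= -pmulrn.
have -> : n%:R ^+ 2 - z%:~R = (m ^+ 2 - z%:~R) - (m - n%:R) * (m + n%:R) :> K by ring.
apply: vgeB mz _; rewrite -[1]addr0; apply: vgeM mn _.
exact: vgeD m_int (vge0_nat n).
Qed.

Lemma unit_sqclass (D : int) u : ~~ (p%:Z %| D)%Z -> ~ legendre_one p D ->
  u != 0 -> v u = 0 -> sqclass u 1 \/ sqclass u D%:~R.
Proof.
move=> pD D_nres u0 vu.
have [n un] : exists n : nat, vge v 1 (u - n%:R) by apply: residue; rewrite ?vu.
have pn : ~~ (p%:Z %| n%:Z)%Z.
  apply/negP => /vge1_intr; rewrite -pmulrn => pn.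
  by move: (vgeD un pn); rewrite subrK => /(vge_le u0); rewrite vu.
have [n0 vn] := intr_unit pn; rewrite -pmulrn in n0 vn.
have u_n : sqclass u n%:R by apply: sqclass_near n0 _; rewrite vn add0r.
case: (classic (legendre_one p n)) => [/legendre_sqrt [t [t0 _ tE]] | n_nres].
  by left; apply: sqclass_trans u_n _; rewrite pmulrn -tE; apply: sqclass_sqr.
right; have [t [t0 _ tE]] := legendre_sqrt (legendre_one_mul p_prime pn pD n_nres D_nres).
have [D0 _] := intr_unit pD.
apply: sqclass_trans u_n _; exists (t / D%:~R); split; first by rewrite mulf_neq0 ?invr_eq0.
by rewrite expr_div_n tE intrM -pmulrn; field.
Qed.

Lemma sqclass_normalize x : x != 0 ->
  exists u, [/\ u != 0, sqclass x u & v u = 0 \/ v u = 1].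
Proof.
move=> x0; pose z := p%:R ^ (- (v x %/ 2)%Z) : K.
have z0 : z != 0 by rewrite expfz_neq0 ?p_neq0.
exists (x * z ^+ 2); split; first by rewrite mulf_neq0 ?expf_neq0.
  by apply: sqclass_sym; exists z.
rewrite v_mul ?expf_neq0 // valuationX // valuationXz ?p_neq0 // v_p mulr1.
have := divz_eq (v x) 2; have := modz_ge0 (v x) (isT : 2 != 0 :> int).
have := ltz_pmod (v x) (isT : 0 < 2 :> int); lia.
Qed.

Section Curve.
Variables A B d : int.
Hypotheses (d_sqf : squarefree_int d) (p_dvd_d : (p%:Z %| d)%Z)
  (p_ndvd_disc : ~~ (p%:Z %| disc A B)%Z).

Local Notation a := (A%:~R : K).
Local Notation b := (B%:~R : K).
Local Notation dd := (d%:~R : K).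
Local Notation c := (a ^+ 2 - 4 * b).

Lemma discE : (disc A B)%:~R = 16 * b ^+ 2 * c :> K.
Proof. by rewrite /disc !intrM rmorphB /= !rmorphXn /= intrM. Qed.

Lemma disc'E : (disc' A B)%:~R = 2 ^+ 8 * b * c ^+ 2 :> K.
Proof.
rewrite /disc' !intrM rmorphB /= rmorphXn /= intrM -expr2.
by congr (_ * _ * _); rewrite -natrX.
Qed.

Lemma b_unit : b != 0 /\ v b = 0.
Proof.
apply: intr_unit; apply: contraNN p_ndvd_disc => pB.
by rewrite /disc dvdz_mulr // dvdz_mull // expr2 dvdz_mulr.
Qed.

Lemma c_unit : c != 0 /\ v c = 0.
Proof.
have -> : c = (A ^+ 2 - 4 * B)%:~R by rewrite rmorphB /= rmorphXn /= intrM.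
by apply: intr_unit; apply: contraNN p_ndvd_disc => pc; rewrite /disc dvdz_mull.
Qed.

Lemma d_val1 : dd != 0 /\ v dd = 1.
Proof.
have dE := divzK p_dvd_d; set e := (d %/ p)%Z in dE.
have pe : ~~ (p%:Z %| e)%Z.
  apply/negP => /divzK eE; have : (p ^ 2 %| `|d|)%N.
    by rewrite -dE -eE !abszM /= -mulnA dvdn_mull.
  by case: d_sqf => _ /[apply] p1; move: p_prime; rewrite p1.
have [e0 ve] := intr_unit pe.
by rewrite -dE intrM -pmulrn mulf_neq0 ?p_neq0 // v_mul ?p_neq0 // ve v_p.
Qed.

Lemma sqclass_disc : sqclass (disc A B)%:~R c.
Proof.
have [b0 _] := b_unit; have [t0 _] := two_unit.
by exists (2 * 2 * b); split; [rewrite !mulf_neq0 | rewrite discE; ring].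
Qed.

Lemma sqclass_disc' : sqclass (disc' A B)%:~R b.
Proof.
have [c0 _] := c_unit; have [t0 _] := two_unit.
by exists (2 ^+ 4 * c); split; [rewrite mulf_neq0 ?expf_neq0 | rewrite disc'E; ring].
Qed.

Lemma c_sqclass1 : legendre_one p (disc A B) -> sqclass c 1.
Proof.
move=> /legendre_sqrt [t [t0 _ tE]].
by apply: sqclass_trans (sqclass_sym sqclass_disc) _; rewrite -tE; apply: sqclass_sqr.
Qed.

Lemma unit_sqclass_c u : ~ legendre_one p (disc A B) -> u != 0 -> v u = 0 ->
  sqclass u 1 \/ sqclass u c.
Proof.
move=> nres u0 vu; have [|u_disc] := unit_sqclass p_ndvd_disc nres u0 vu; first by left.
by right; apply: sqclass_trans u_disc sqclass_disc.
Qed.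

Lemma b_sqrt : legendre_one p (disc' A B) -> exists s, s ^+ 2 = b.
Proof.
move=> /legendre_sqrt [t [t0 _ tE]]; have [z [z0 zE]] := sqclass_sym sqclass_disc'.
by exists (t * z); rewrite exprMn tE zE.
Qed.

Lemma no_b_sqrt_mod_p m : ~ legendre_one p (disc' A B) -> vge v 0 m ->
  ~ vge v 1 (m ^+ 2 - 4 * b).
Proof.
move=> nres m_int mb; apply: nres.
have [b0 vb] := b_unit; have [c0 vc] := c_unit; have [t0 vt] := two_unit.
have w0 : 2 ^+ 3 * c != 0 by rewrite mulf_neq0 ?expf_neq0.
have vw : v (2 ^+ 3 * c) = 0 by rewrite v_mul ?expf_neq0 // valuationX // vt vc mulr0.
have pdisc' : ~~ (p%:Z %| disc' A B)%Z.
  have d'0 : 2 ^+ 8 * b * c ^+ 2 != 0 by rewrite !mulf_neq0 ?expf_neq0.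
  apply/negP => /vge1_intr; rewrite disc'E => /(vge_le d'0).
  by rewrite !v_mul ?mulf_neq0 ?expf_neq0 // vt vb vc.
apply: (legendre_of_vge1 pdisc' (m := 2 ^+ 3 * c * m)).
  by rewrite -[0]addr0; apply: vgeM m_int; right; rewrite vw.
have -> : (2 ^+ 3 * c * m) ^+ 2 - (disc' A B)%:~R = (2 ^+ 3 * c) ^+ 2 * (m ^+ 2 - 4 * b).
  by rewrite disc'E; ring.
by rewrite -[1]add0r; apply: vgeM mb; right; rewrite valuationX // vw mulr0.
Qed.

Definition quad x := x ^+ 2 - 2 * (dd * a) * x + dd ^+ 2 * c.

Lemma on_EdualE x y : on_Edual A B d (Some (x, y)) <-> y ^+ 2 = x * quad x.
Proof.
rewrite /on_Edual /quad !intrM !rmorphB /= !rmorphXn /= intrM.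
by split=> ->; ring.
Qed.

Lemma kummer0E y : kummer A B d (Some (0, y)) = dd ^+ 2 * c.
Proof. by rewrite /kummer eqxx intrM rmorphB /= !rmorphXn /= intrM. Qed.

Lemma in_W1 x : sqclass x 1 -> in_W A B d x.
Proof. by exists None. Qed.

Lemma in_Wc x : sqclass x c -> in_W A B d x.
Proof.
move=> xc; have [d0 _] := d_val1.
exists (Some (0, 0)); split; first by apply/on_EdualE; rewrite /quad; ring.
rewrite kummer0E; apply: sqclass_trans xc _.
by exists dd^-1; split; [rewrite invr_eq0 | field].
Qed.

Lemma in_W_unit u x : ~ legendre_one p (disc A B) -> u != 0 -> v u = 0 ->
  sqclass x u -> in_W A B d x.
Proof.
move=> nres u0 vu xu; have [u1|uc] := unit_sqclass_c nres u0 vu.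
  exact/in_W1/(sqclass_trans xu u1).
exact/in_Wc/(sqclass_trans xu uc).
Qed.

Lemma sqrt_b_unit s : s ^+ 2 = b -> s != 0 /\ v s = 0.
Proof.
move=> sb; have [b0 vb] := b_unit.
have s0 : s != 0 by apply: contraNneq b0 => s0; rewrite -sb s0 expr2 mul0r.
by split=> //; have := valuationX 2 s0; rewrite sb vb; move: (v s) => k; lia.
Qed.

Lemma a_add_2sqrt_unit s : s ^+ 2 = b -> a + 2 * s != 0 /\ v (a + 2 * s) = 0.
Proof.
move=> sb; have [c0 vc] := c_unit; have [s0 vs] := sqrt_b_unit sb.
have [t0 vt] := two_unit.
have cE : (a + 2 * s) * (a - 2 * s) = c by rewrite -sb; ring.
have ap0 : a + 2 * s != 0 by apply: contraNneq c0 => ap0; rewrite -cE ap0 mul0r.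
have am0 : a - 2 * s != 0 by apply: contraNneq c0 => am0; rewrite -cE am0 mulr0.
have two_s : vge v 0 (2 * s) by right; rewrite v_mul // vt vs.
have vp := vge_le ap0 (vgeD (vge0_int A) two_s).
have vm := vge_le am0 (vgeB (vge0_int A) two_s).
have vpm := v_mul ap0 am0; rewrite cE vc in vpm.
by split=> //; move: (v (a + 2 * s)) (v (a - 2 * s)) vp vm vpm => k l; lia.
Qed.

Lemma sqclass_a_sub_2sqrt s : s ^+ 2 = b ->
  sqclass (dd * (a - 2 * s)) (c * (dd * (a + 2 * s))).
Proof.
move=> sb; have [ap0 _] := a_add_2sqrt_unit sb.
exists (a + 2 * s)^-1; split; first by rewrite invr_eq0.
by rewrite -sb; field.
Qed.

Lemma in_W_root s x : s ^+ 2 = b -> sqclass x (dd * (a + 2 * s)) -> in_W A B d x.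
Proof.
move=> sb xr; have [ap0 _] := a_add_2sqrt_unit sb; have [d0 _] := d_val1.
exists (Some (dd * (a + 2 * s), 0)); split; first by apply/on_EdualE; rewrite /quad -sb; ring.
by rewrite /kummer (negbTE (mulf_neq0 d0 ap0)).
Qed.

Lemma vge1_2da : vge v 1 (2 * (dd * a)).
Proof.
have [d0 vd] := d_val1; rewrite -[1]add0r; apply: vgeM (vge0_nat 2) _.
by rewrite -[1]addr0; apply: vgeM (vge0_int A); right; rewrite vd.
Qed.

Lemma vge2_ddc : vge v 2 (dd ^+ 2 * c).
Proof.
have [d0 vd] := d_val1; have [c0 vc] := c_unit.
by right; rewrite v_mul ?expf_neq0 // valuationX // vd vc.
Qed.

Lemma sqclass_quad_small x : x != 0 -> v x <= 0 -> sqclass (quad x) 1.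
Proof.
move=> x0 vx; apply: sqclass_trans (sqclass_sqr x0).
apply: sqclass_near; first by rewrite expf_neq0.
have -> : quad x - x ^+ 2 = - (2 * (dd * a)) * x + dd ^+ 2 * c by rewrite /quad; ring.
rewrite valuationX //; apply: vgeD.
  by apply: vgeW (vgeM (vgeN vge1_2da) (vge_valuation x)); lia.
by apply: vgeW vge2_ddc; lia.
Qed.

Lemma sqclass_quad_large x : x != 0 -> 2 <= v x -> sqclass (quad x) c.
Proof.
move=> x0 vx; have [d0 vd] := d_val1; have [c0 vc] := c_unit.
apply: (@sqclass_trans _ _ (dd ^+ 2 * c)); last by rewrite mulrC; exists dd.
apply: sqclass_near; first by rewrite mulf_neq0 ?expf_neq0.
have -> : quad x - dd ^+ 2 * c = (x - 2 * (dd * a)) * x by rewrite /quad; ring.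
have x1 : vge v 1 x by right; lia.
rewrite v_mul ?expf_neq0 // valuationX // vd vc.
by apply: vgeW (vgeM (vgeB x1 vge1_2da) (vge_valuation x)); lia.
Qed.

Lemma quad_val1 x y : x != 0 -> v x = 1 -> y ^+ 2 = x * quad x ->
  vge v 1 ((x / dd - a) ^+ 2 - 4 * b).
Proof.
move=> x0 vx xy; have [d0 vd] := d_val1.
set t := x / dd; set R := (t - a) ^+ 2 - 4 * b.
have [->|R0] := eqVneq R 0; first by left.
have vt : v t = 0 by rewrite v_mul ?invr_eq0 // valuationV // vx vd subrr.
have R_int : vge v 0 R.
  apply: vgeB; first by rewrite -[0]addr0 expr2; apply: vgeM;
    apply: vgeB (vge0_int A); right; rewrite vt.
  by rewrite -[0]addr0; apply: vgeM (vge0_nat 4) (vge0_int B).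
have qE : quad x = dd ^+ 2 * R by rewrite /quad /R /t; field.
have xq0 : x * quad x != 0 by rewrite qE !mulf_neq0 ?expf_neq0.
have y0 : y != 0 by apply: contraNneq xq0 => y0; rewrite -xy y0 expr2 mul0r.
have := valuationX 2 y0.
rewrite xy qE v_mul ?mulf_neq0 ?expf_neq0 // v_mul ?expf_neq0 // valuationX // vx vd.
move=> vyR; right; have := vge_le R0 R_int.
by move: (v y) (v R) vyR => k l; lia.
Qed.

Lemma kummer_classes P : on_Edual A B d P ->
  [\/ sqclass (kummer A B d P) 1, sqclass (kummer A B d P) c |
      exists t, [/\ t != 0, v t = 0, vge v 1 ((t - a) ^+ 2 - 4 * b)
                  & kummer A B d P = dd * t]].
Proof.
case: P => [[x y]|_]; last by apply: Or31; apply: sqclass_refl.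
move=> /on_EdualE xy; have [d0 vd] := d_val1; have [c0 _] := c_unit.
have [->|x0] := eqVneq x 0; first by apply: Or32; rewrite kummer0E mulrC; exists dd.
rewrite /kummer (negbTE x0).
case: (ltgtP (v x) 1) => vx.
- have q1 : sqclass (quad x) 1 by apply: sqclass_quad_small => //; lia.
  have q0 := sqclass_neq0 (oner_neq0 K) q1.
  by apply: Or31; exact: sqclass_trans (sqclass_of_sqr_eq x0 q0 xy) q1.
- have qc : sqclass (quad x) c by apply: sqclass_quad_large => //; lia.
  by apply: Or32; exact: sqclass_trans (sqclass_of_sqr_eq x0 (sqclass_neq0 c0 qc) xy) qc.
- apply: Or33; exists (x / dd); split; last by rewrite mulrC divfK.
  + by rewrite mulf_neq0 ?invr_eq0.
  + by rewrite v_mul ?invr_eq0 // valuationV // vx vd subrr.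
  + exact: quad_val1 x0 vx xy.
Qed.

Lemma kummer_classes_nonsqr_b P : ~ legendre_one p (disc' A B) -> on_Edual A B d P ->
  sqclass (kummer A B d P) 1 \/ sqclass (kummer A B d P) c.
Proof.
move=> nres /kummer_classes [k1|kc|[t [t0 vt tb _]]]; [by left | by right | exfalso].
by apply: no_b_sqrt_mod_p nres _ tb; apply: vgeB (vge0_int A); right; rewrite vt.
Qed.

Lemma W_type1 : type1 p A B -> forall s, s ^+ 2 = b -> forall x, x != 0 ->
  (in_W A B d x <-> sqclass x 1 \/ sqclass x (dd * (a + 2 * s))).
Proof.
case=> c_res _ s sb x _; have c1 := c_sqclass1 c_res.
have [ap0 vap] := a_add_2sqrt_unit sb.
have [am0 vam] : a - 2 * s != 0 /\ v (a - 2 * s) = 0.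
  by rewrite -mulrN; apply: a_add_2sqrt_unit; rewrite sqrrN.
have r_minus : sqclass (dd * (a - 2 * s)) (dd * (a + 2 * s)).
  apply: sqclass_trans (sqclass_a_sub_2sqrt sb) _.
  by rewrite -[X in sqclass _ X]mul1r; apply: sqclassM c1 (sqclass_refl _).
split; last by case=> [/in_W1 | /(in_W_root sb)].
case=> P [onP xk]; case: (kummer_classes onP) => [k1|kc|[t [t0 vt tb kt]]].
- by left; apply: sqclass_trans xk k1.
- by left; apply: sqclass_trans xk (sqclass_trans kc c1).
right; apply: sqclass_trans xk _; rewrite kt.
have t_int : vge v 0 t by right; rewrite vt.
have tbE : (t - a) ^+ 2 - 4 * b = (t - (a + 2 * s)) * (t - (a - 2 * s)).
  by rewrite -sb; ring.
rewrite tbE in tb.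
have ap_int : vge v 0 (a + 2 * s) by right; rewrite vap.
have am_int : vge v 0 (a - 2 * s) by right; rewrite vam.
case: (vge1M (vgeB t_int ap_int) (vgeB t_int am_int) tb) => [near_p|near_m].
  by apply: sqclassMl; apply: sqclass_near ap0 _; rewrite vap add0r.
apply: sqclass_trans r_minus; apply: sqclassMl.
by apply: sqclass_near am0 _; rewrite vam add0r.
Qed.

Lemma W_type2 : type2 p A B -> forall x, x != 0 -> (in_W A B d x <-> sqclass x 1).
Proof.
case=> c_res b_nres x _; split; last exact: in_W1.
case=> P [onP xk]; apply: sqclass_trans xk _.
case: (kummer_classes_nonsqr_b b_nres onP) => // kc.
exact: sqclass_trans kc (c_sqclass1 c_res).
Qed.

Lemma W_type3 : type3 p A B -> forall x, x != 0 -> in_W A B d x.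
Proof.
case=> c_nres b_res x x0; have [s sb] := b_sqrt b_res.
have [u [u0 xu [vu|vu]]] := sqclass_normalize x0; first exact: in_W_unit c_nres u0 vu xu.
have [d0 vd] := d_val1; have [ap0 vap] := a_add_2sqrt_unit sb.
set r := dd * (a + 2 * s).
have r0 : r != 0 by rewrite mulf_neq0.
have ur0 : u / r != 0 by rewrite mulf_neq0 ?invr_eq0.
have vur : v (u / r) = 0 by rewrite v_mul ?invr_eq0 // valuationV // v_mul // vu vd vap.
have xE : sqclass x (u / r * r) by rewrite divfK.
have [ur1|urc] := unit_sqclass_c c_nres ur0 vur.
  apply: (in_W_root sb); apply: sqclass_trans xE _.
  by rewrite -[X in sqclass _ X]mul1r; apply: sqclassM ur1 (sqclass_refl _).
apply: (in_W_root (s := - s)); first by rewrite sqrrN.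
apply: sqclass_trans xE (sqclass_trans (sqclassM urc (sqclass_refl r)) _).
by rewrite mulrN; apply: sqclass_sym; apply: sqclass_a_sub_2sqrt.
Qed.

Lemma W_type4 : type4 p A B -> forall x, x != 0 ->
  (in_W A B d x <-> exists u, u != 0 /\ v u = 0 /\ sqclass x u).
Proof.
case=> c_nres b_nres x _; split.
  case=> P [onP xk]; have [c0 vc] := c_unit.
  case: (kummer_classes_nonsqr_b b_nres onP) => [k1|kc].
    exists 1; rewrite oner_neq0 valuation1.
    by split=> //; split=> //; exact: sqclass_trans xk k1.
  by exists c; split=> //; split=> //; apply: sqclass_trans xk kc.
by case=> u [u0 [vu xu]]; apply: in_W_unit c_nres u0 vu xu.
Qed.

End Curve.
End Padic.
End Valuation.

Theorem corollary3p4 (A B d : int) (p : nat) (K : fieldType) (v : K -> int) :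
  two_torsion_Z2 A B ->
  squarefree_int d ->
  prime p ->
  (p%:Z %| d)%Z ->
  coprime p `|(2 * disc A B)%R|%N ->
  is_Qp p v ->
  [/\ (type1 p A B ->
        forall s : K, s ^+ 2 = B%:~R ->
        forall x : K, x != 0 ->
          (in_W A B d x <-> sqclass x 1 \/ sqclass x (d%:~R * (A%:~R + 2 * s)))),
      (type2 p A B ->
        forall x : K, x != 0 -> (in_W A B d x <-> sqclass x 1)),
      (type3 p A B ->
        forall x : K, x != 0 -> in_W A B d x) &
      type4 p A B ->
        forall x : K, x != 0 ->
          (in_W A B d x <-> exists u : K, u != 0 /\ v u = 0 /\ sqclass x u)].
Proof.
move=> _ d_sqf p_prime p_dvd_d.
rewrite abszM coprimeMr => /andP[p_coprime2 p_coprime_disc].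
case=> char0 v_mul v_add [v_p residue] complete.
have p_odd : odd p by case: (even_prime p_prime) p_coprime2 => [->|].
have p_ndvd_disc : ~~ (p%:Z %| disc A B)%Z by rewrite dvdzE -prime_coprime.
by split; [apply: (W_type1 v_mul) | apply: (W_type2 v_mul) | apply: (W_type3 v_mul)
  | apply: (W_type4 v_mul)].
Qed.
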